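(* Let $s,t\ge 1$, let $k=s+t+4\le n$, and let $Q(s,t)$ be the unicyclic graph on $k$ vertices consisting of a $4$-cycle $v_1v_2v_3v_4v_1$, $s$ further vertices each adjacent only to $v_1$, and $t$ further vertices each adjacent only to $v_2$. Regard $Q(s,t)$ as a subgraph of $K_n$ and let $\Gamma=(K_n,Q(s,t)^-)$. Then, with $u=n-k$, $$\varphi(\Gamma,\lambda)=(\lambda+1)^{n-7}\Big(\lambda^7+(7-n)\lambda^6+(21-6n)\lambda^5+(12k-15n+4ku+8st-13)\lambda^4+(48k-20n+16ku+32st-157)\lambda^3+(113n-56k-8ku-16st(u-1)-267)\lambda^2+(250n-208k-48ku-32st(u+1)-185)\lambda+127n-116k-28ku+24st(2u-1)-47\Big).$$
   Context: A signed graph is a pair $(G,\sigma)$ with $\sigma:E(G)\to\{+,-\}$; its adjacency matrix has $(i,j)$-entry $\sigma(v_iv_j)$ if $v_iv_j\in E(G)$ and $0$ otherwise. For a subgraph $H$ of $K_n$, $(K_n,H^-)$ denotes the signed complete graph on $n$ vertices whose negative edges are exactly the edges of $H$ and all other edges are positive. $\varphi(\Gamma,\lambda)=\det(\lambda I-A(\Gamma))$. *)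

From mathcomp Require Import all_boot all_order all_algebra.
Set Implicit Arguments. Unset Strict Implicit. Unset Printing Implicit Defensive.
Import Order.TTheory GRing.Theory Num.Theory.
Local Open Scope ring_scope.

(* Edge relation of Q(s,t) on vertex labels 0..s+t+3 (as nats):
   0,1,2,3 are v1,v2,v3,v4 (4-cycle v1v2v3v4v1);
   4 .. 3+s are the s pendant vertices attached to v1 (label 0);
   4+s .. 3+s+t are the t pendant vertices attached to v2 (label 1). *)
Definition Qedge0 (s t i j : nat) : bool :=
  [|| (i == 0%N) && (j == 1%N), (i == 1%N) && (j == 2%N),
      (i == 2%N) && (j == 3%N), (i == 3%N) && (j == 0%N),
      (i == 0%N) && (4 <= j < 4 + s)%N
    | (i == 1%N) && (4 + s <= j < 4 + s + t)%N].

Definition Qedge (s t i j : nat) : bool := Qedge0 s t i j || Qedge0 s t j i.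

Definition signedKQ (n s t : nat) (f : 'I_(s + t + 4) -> 'I_n) : 'M[int]_n :=
  \matrix_(i < n, j < n)
    if i == j then 0
    else if [exists a : 'I_(s + t + 4), exists b : 'I_(s + t + 4),
               [&& f a == i, f b == j & Qedge s t a b]]
         then -1 else 1.

Definition Ppoly (n s t : nat) : {poly int} :=
  let N : int := n%:Z in
  let k : int := (s + t + 4)%N%:Z in
  let u : int := (n - (s + t + 4))%N%:Z in
  let st : int := (s * t)%N%:Z in
  'X^7 + (7 - N)%:P * 'X^6 + (21 - 6 * N)%:P * 'X^5
  + (12 * k - 15 * N + 4 * k * u + 8 * st - 13)%:P * 'X^4
  + (48 * k - 20 * N + 16 * k * u + 32 * st - 157)%:P * 'X^3
  + (113 * N - 56 * k - 8 * k * u - 16 * st * (u - 1) - 267)%:P * 'X^2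
  + (250 * N - 208 * k - 48 * k * u - 32 * st * (u + 1) - 185)%:P * 'X
  + (127 * N - 116 * k - 28 * k * u + 24 * st * (2 * u - 1) - 47)%:P.

(* Write A_Q for the adjacency matrix of the embedded copy of Q(s,t), so that
   A(Γ) = J - I - 2 A_Q and λI - A(Γ) = (λ+1) I - (J - 2 A_Q).  Split the
   vertices of K_n into seven classes: v1, v2, v3, v4, the pendant vertices at
   v1, those at v2, and the u vertices outside Q(s,t).  An entry of J - 2 A_Q
   depends only on the classes of its row and column, so J - 2 A_Q = P C with
   P of size n x 7 and C of size 7 x n.  Sylvester's identity
   x^7 det(x I_n - P C) = x^n det(x I_7 - C P) then reduces the characteristic
   polynomial to a 7 x 7 determinant whose entries are affine in s, t and u. *)
From Stdlib Require Import PeanoNat.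
From mathcomp Require Import all_boot all_order all_algebra.
From mathcomp Require Import ring zify.
Set Implicit Arguments. Unset Strict Implicit. Unset Printing Implicit Defensive.
Import GRing.Theory.
Local Open Scope ring_scope.

Lemma sylvester_det (R : comNzRingType) m n (A : 'M[R]_(m, n)) (B : 'M[R]_(n, m))
    (x : R) :
  x ^+ n * \det (x%:M - A *m B) = x ^+ m * \det (x%:M - B *m A).
Proof.
pose M1 : 'M[R]_(m + n) := block_mx 1%:M 0 (- B) x%:M.
pose M2 : 'M[R]_(m + n) := block_mx x%:M A B 1%:M.
pose M3 : 'M[R]_(m + n) := block_mx 1%:M 0 (- B) 1%:M.
have M12 : M1 *m M2 = block_mx x%:M A 0 (x%:M - B *m A).
  rewrite /M1 /M2 mulmx_block !mul1mx !mul0mx !addr0 ?add0r mulmx1.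
  by rewrite mul_mx_scalar mul_scalar_mx mulNmx scalerN addNr (addrC _ x%:M).
have M23 : M2 *m M3 = block_mx (x%:M - A *m B) A 0 1%:M.
  rewrite /M2 /M3 mulmx_block !mulmx1 !mulmx0 ?addr0 !mulmxN mul_scalar_mx.
  by rewrite scale1r subrr !add0r.
have detM1 : \det M1 = x ^+ n by rewrite /M1 det_lblock det1 det_scalar mul1r.
have detM3 : \det M3 = 1 by rewrite /M3 det_lblock !det1 mul1r.
have := congr1 determinant M12; rewrite det_mulmx detM1 det_ublock det_scalar => <-.
have := congr1 determinant M23.
by rewrite det_mulmx detM3 mulr1 det_ublock det1 mulr1 => ->.
Qed.

Section SparseLaplace.
Variable R : comNzRingType.

(* Entries are indexed by nat and [None] marks a structural zero, so that [cbv]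
   unfolds [det_laplace] to a ring expression free of the vanishing terms. *)
Definition laplace_minor (j : nat) (A : nat -> nat -> option R) (i k : nat) :=
  A i.+1 (if Nat.ltb k j then k else k.+1).

Fixpoint det_laplace (n : nat) (A : nat -> nat -> option R) : R :=
  match n with
  | 0 => 1
  | n'.+1 =>
    foldr (fun j acc => match A 0%N j with
      | None => acc
      | Some v => let c := v * det_laplace n' (laplace_minor j A) in
                  (if odd j then - c else c) + acc end)
      0 (iota 0 n'.+1)
  end.

Lemma det_laplaceS n A :
  det_laplace n.+1 A =
  \sum_(j < n.+1) (-1) ^+ j * odflt 0 (A 0%N j) * det_laplace n (laplace_minor j A).
Proof.
rewrite -(big_mkord xpredT
  (fun j => (-1) ^+ j * odflt 0 (A 0%N j) * det_laplace n (laplace_minor j A))).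
rewrite /index_iota subn0; cbn [det_laplace].
elim: (iota 0 n.+1) => [|j js IHjs] /=; first by rewrite big_nil.
rewrite big_cons IHjs; case: (A 0%N j) => [v|] /=; last by rewrite mulr0 mul0r add0r.
by rewrite -signr_odd; case: (odd j); rewrite /= ?mulN1r ?mul1r ?mulNr.
Qed.

Lemma det_laplaceE n A :
  det_laplace n A = \det (\matrix_(i < n, j < n) odflt 0 (A i j)).
Proof.
elim: n A => [|n IHn] A; first by rewrite det_mx00.
rewrite det_laplaceS (expand_det_row _ ord0); apply: eq_bigr => j _.
rewrite /cofactor mxE IHn add0n mulrCA mulrA; congr (_ * _ * \det _).
apply/matrixP => i k; rewrite !mxE /laplace_minor /= /bump add1n.
by case: (Nat.ltb_spec k j) => /leP; rewrite ?ltnNge => h; rewrite ?(negbTE h) ?h.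
Qed.

End SparseLaplace.

(* The quotient of Q(s,t) by its seven vertex classes: 0..3 are v1..v4,
   4 stands for the pendant vertices at v1, 5 for those at v2, and 6 for the
   vertices of K_n outside Q(s,t). *)
Definition qadj (a b : nat) : bool :=
  match a, b with
  | 0, 1 | 1, 0 | 1, 2 | 2, 1 | 2, 3 | 3, 2 | 3, 0 | 0, 3 | 0, 4 | 4, 0 | 1, 5 | 5, 1 => true
  | _, _ => false
  end.

Lemma qadj_irr a : qadj a a = false.
Proof. by do 6 (case: a => [|a] //). Qed.

Definition qclass (s a : nat) : nat :=
  if (a < 4)%N then a else if (a < 4 + s)%N then 4%N else 5%N.

Lemma qclass_le s a : (qclass s a <= 5)%N.
Proof. by rewrite /qclass; case: ifP => ?; last case: ifP => ?; lia. Qed.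

Lemma qclass_spec s t a : (a < s + t + 4)%N ->
  [/\ (a == 0)%N = (qclass s a == 0)%N, (a == 1)%N = (qclass s a == 1)%N,
      (a == 2)%N = (qclass s a == 2)%N, (a == 3)%N = (qclass s a == 3)%N &
      (4 <= a < 4 + s)%N = (qclass s a == 4)%N] /\
  (4 + s <= a < 4 + s + t)%N = (qclass s a == 5)%N.
Proof.
by move=> ?; rewrite /qclass; case: ifP => ?; last case: ifP => ?; (split; [split|]); lia.
Qed.

Lemma Qedge_qclass s t (a b : 'I_(s + t + 4)) :
  Qedge s t a b = qadj (qclass s a) (qclass s b).
Proof.
rewrite /Qedge /Qedge0.
have [[-> -> -> -> ->] ->] := qclass_spec (ltn_ord a).
have [[-> -> -> -> ->] ->] := qclass_spec (ltn_ord b).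
have := qclass_le s a; have := qclass_le s b.
move: (qclass s a) (qclass s b) => x y.
by case: x => [|[|[|[|[|[|x]]]]]]; case: y => [|[|[|[|[|[|y]]]]]].
Qed.

Lemma sum_qclass (V : nmodType) s t (G : nat -> V) :
  \sum_(a < s + t + 4) G (qclass s a) =
  G 0%N + G 1%N + G 2%N + G 3%N + G 4%N *+ s + G 5%N *+ t.
Proof.
rewrite -(big_mkord xpredT (fun a => G (qclass s a))).
rewrite (big_cat_nat (n := 4)) //=; last lia.
rewrite (big_cat_nat (m := 4) (n := 4 + s)) //=; try lia.
have -> : \sum_(0 <= a < 4) G (qclass s a) = G 0%N + G 1%N + G 2%N + G 3%N.
  by rewrite /index_iota /= !big_cons big_nil addr0 !addrA.
rewrite (@eq_big_nat _ _ _ 4 (4 + s) _ (fun _ => G 4%N)); last first.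
  by move=> a /andP [a_ge4 a_lt]; rewrite /qclass ltnNge a_ge4 /= a_lt.
rewrite (@eq_big_nat _ _ _ (4 + s) (s + t + 4) _ (fun _ => G 5%N)); last first.
  by move=> a /andP [? ?]; rewrite /qclass; do 2 (rewrite ifF; last lia).
by rewrite !sumr_const_nat addrA; congr (_ + _ *+ _ + _ *+ _); lia.
Qed.

Section Quotient.
Variable R : comNzRingType.

Definition qsize (s t : R) (b : nat) : R :=
  match b with 4 => s | 5 => t | _ => 1 end.

Definition qdeg (s t : R) (a : nat) : R :=
  match a with 0 => 2%:R + s | 1 => 2%:R + t | 2 | 3 => 2%:R | _ => 1 end.

Definition quot_entries (x s t N : R) (a b : nat) : option R :=
  if Nat.eqb a 6 then Some (if Nat.eqb b 6 then x - N else - qsize s t b)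
  else if Nat.eqb b 6 then Some (2%:R * qdeg s t a)
  else if Nat.eqb a b then Some x
  else if qadj a b then Some (2%:R * qsize s t b) else None.

Lemma det_quot_entries X s t u :
  let k := s + t + 4%:R in let N := u + k in let st := s * t in
  \det (\matrix_(a < 7, b < 7) odflt 0 (quot_entries (X + 1) s t N a b)) =
  X ^+ 7 + (7%:R - N) * X ^+ 6 + (21%:R - 6%:R * N) * X ^+ 5
  + (12%:R * k - 15%:R * N + 4%:R * k * u + 8%:R * st - 13%:R) * X ^+ 4
  + (48%:R * k - 20%:R * N + 16%:R * k * u + 32%:R * st - 157%:R) * X ^+ 3
  + (113%:R * N - 56%:R * k - 8%:R * k * u - 16%:R * st * (u - 1) - 267%:R) * X ^+ 2
  + (250%:R * N - 208%:R * k - 48%:R * k * u - 32%:R * st * (u + 1) - 185%:R) * X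
  + (127%:R * N - 116%:R * k - 28%:R * k * u + 24%:R * st * (2%:R * u - 1) - 47%:R).
Proof.
move=> k N st; rewrite -det_laplaceE.
cbv beta iota zeta delta [det_laplace laplace_minor foldr iota odd Nat.ltb Nat.leb
  Nat.eqb quot_entries qadj qsize qdeg odflt oapp negb].
by rewrite /st /N /k; ring.
Qed.

End Quotient.

Definition factL_entry (R : comNzRingType) (y c : nat) : R :=
  if c == 6%N then 1 else (y == c)%:R.
Definition factR_entry (R : comNzRingType) (c y : nat) : R :=
  if c == 6%N then 1 else - 2%:R * (qadj c y)%:R.

Section Embedding.
Variables (n s t : nat) (f : 'I_(s + t + 4) -> 'I_n).
Hypothesis f_inj : injective f.

Definition vclass (i : 'I_n) : nat :=
  if [pick a | f a == i] is Some a then qclass s a else 6%N.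

Lemma vclass_f a : vclass (f a) = qclass s a.
Proof.
by rewrite /vclass; case: pickP => [a' /eqP /f_inj -> // | /(_ a)]; rewrite eqxx.
Qed.

Lemma vclass_notin i : i \notin [set f a | a in setT] -> vclass i = 6%N.
Proof.
move=> i_out; rewrite /vclass; case: pickP => [a /eqP fa | //].
by move: i_out; rewrite -fa imset_f.
Qed.

Lemma vclass_le i : (vclass i <= 6)%N.
Proof. by rewrite /vclass; case: pickP => [a _ | //]; have := qclass_le s a; lia. Qed.

Lemma embedded_QedgeE i j :
  [exists a, exists b, [&& f a == i, f b == j & Qedge s t a b]] =
  qadj (vclass i) (vclass j).
Proof.
have [/imsetP [a _ ->] | i_out] := boolP (i \in [set f a | a in setT]); last first.
  rewrite vclass_notin //; apply/negbTE/existsP => [[a /existsP [b /and3P [/eqP fa _ _]]]].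
  by move: i_out; rewrite -fa imset_f.
have [/imsetP [b _ ->] | j_out] := boolP (j \in [set f b | b in setT]); last first.
  have -> : qadj (vclass (f a)) (vclass j) = false.
    rewrite (vclass_notin j_out) vclass_f.
    by have := qclass_le s a; case: (qclass s a) => [|[|[|[|[|[|]]]]]].
  apply/negbTE/existsP => [[a' /existsP [b /and3P [_ /eqP fb _]]]].
  by move: j_out; rewrite -fb imset_f.
rewrite !vclass_f -Qedge_qclass; apply/idP/idP.
  by move=> /existsP [a' /existsP [b' /and3P [/eqP /f_inj -> /eqP /f_inj -> ->]]].
by move=> Qab; apply/existsP; exists a; apply/existsP; exists b; rewrite !eqxx Qab.
Qed.

Lemma sum_vclass (V : nmodType) (G : nat -> V) :
  \sum_(i < n) G (vclass i) =
  G 0%N + G 1%N + G 2%N + G 3%N + G 4%N *+ s + G 5%N *+ t + G 6%N *+ (n - (s + t + 4)).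
Proof.
pose Qv := [set f a | a in setT].
have card_out : #|~: Qv| = (n - (s + t + 4))%N.
  by have := cardsC Qv; rewrite card_imset // cardsT !card_ord; lia.
rewrite (bigID (mem Qv)) /= big_imset /=; last by move=> a b _ _; apply: f_inj.
under eq_bigr do rewrite vclass_f.
under [X in _ + X]eq_bigr => i /vclass_notin -> do over.
rewrite sumr_const -card_out; congr (_ + _ *+ _); last by apply: eq_card => i; rewrite !inE.
by rewrite -sum_qclass; apply: eq_bigl => a; rewrite inE.
Qed.

Definition factL (R : comNzRingType) : 'M[R]_(n, 7) :=
  \matrix_(i, c) factL_entry R (vclass i) c.
Definition factR (R : comNzRingType) : 'M[R]_(7, n) :=
  \matrix_(c, j) factR_entry R c (vclass j).

Lemma factLR_entry R i j :
  (factL R *m factR R) i j = 1 - 2%:R * (qadj (vclass i) (vclass j))%:R.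
Proof.
rewrite !mxE !big_ord_recl big_ord0 /factL /factR !mxE /=.
have := vclass_le i; case: (vclass i) => [|[|[|[|[|[|[|]]]]]]] // _.
all: by rewrite /factL_entry /factR_entry /=; ring.
Qed.

Lemma char_poly_mx_signedKQ :
  char_poly_mx (signedKQ f) = ('X + 1)%:M - factL _ *m factR {poly int}.
Proof.
apply/matrixP => i j; have := factLR_entry {poly int} i j; rewrite !mxE => ->.
case: (eqVneq i j) => [<- | _]; first by rewrite qadj_irr /= polyC0 mulr1n; ring.
rewrite embedded_QedgeE; case: qadj; rewrite /= ?polyCN ?polyC1 mulr0n; ring.
Qed.

Lemma factRL_quot_entries (R : comNzRingType) (x : R) :
  x%:M - factR R *m factL R = \matrix_(a < 7, b < 7)
    odflt 0 (quot_entries x s%:R t%:R ((n - (s + t + 4))%:R + (s%:R + t%:R + 4%:R)) a b).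
Proof.
apply/matrixP => a b; rewrite !mxE.
under eq_bigr do rewrite !mxE.
rewrite (sum_vclass (fun y => factR_entry R a y * factL_entry R y b)).
case: a b => [[|[|[|[|[|[|[|a]]]]]]] ?] // [[|[|[|[|[|[|[|b]]]]]]] ?] //.
all: by rewrite /factR_entry /factL_entry /quot_entries /=; ring.
Qed.

Lemma char_poly_signedKQ_mulX :
  ('X + 1) ^+ 7 * char_poly (signedKQ f) = ('X + 1) ^+ n * Ppoly n s t.
Proof.
rewrite /char_poly char_poly_mx_signedKQ sylvester_det factRL_quot_entries; congr (_ * _).
rewrite (det_quot_entries 'X s%:R t%:R (n - (s + t + 4))%:R) /Ppoly.
have k_le_n : (s + t + 4 <= n)%N by have := leq_card f f_inj; rewrite !card_ord.
set u := (n - (s + t + 4))%N; have -> : n = (u + (s + t + 4))%N by rewrite subnK.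
have polyC_int (z : int) : z%:P = z%:~R :> {poly int} by rewrite -[z in LHS]intz rmorph_int.
by rewrite !polyC_int; ring.
Qed.

End Embedding.

Theorem lemma3p3 (n s t : nat) (f : 'I_(s + t + 4) -> 'I_n) :
  (1 <= s)%N -> (1 <= t)%N -> (s + t + 4 <= n)%N -> injective f ->
  ((7 <= n)%N ->
     char_poly (signedKQ f) = ('X + 1) ^+ (n - 7) * Ppoly n s t) /\
  ('X + 1) ^+ 7 * char_poly (signedKQ f) = ('X + 1) ^+ n * Ppoly n s t.
Proof.
(* Injectivity of f already forces s + t + 4 <= n, and the class counting
   never needs the pendant classes to be nonempty. *)
move=> _ _ _ f_inj; have charE := char_poly_signedKQ_mulX f_inj.
split=> // n_ge7.
have Xp1_neq0 : ('X + 1 : {poly int}) ^+ 7 != 0.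
  by rewrite expf_neq0 // -size_poly_eq0 -polyC1 size_XaddC.
by apply: (mulfI Xp1_neq0); rewrite charE mulrA -exprD subnKC.
Qed.
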